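(* Let $T>0$, $\mu>0$, $U>0$ with $UJ(T)<\mu/2$. Then every minimizer $(\gamma,\alpha,\rho_0)$ of $\mathcal{F}$ over $\mathcal{D}$ has $\rho_0\neq0$.
   Context: Let $\mathbb{T}^3=[-\pi,\pi]^3$ with periodic identification and normalized Haar measure $dp$. Let $\varepsilon(p)=4\sum_{k=1}^3\sin^2(p_k/2)$. $\mathcal{D}=\{(\gamma,\alpha,\rho_0): \gamma\in L^1(\mathbb{T}^3),\ \gamma\ge0,\ \alpha^2\le\gamma(1+\gamma)\text{ a.e.},\ \rho_0\ge0\}$. With $\beta=\sqrt{(\tfrac12+\gamma)^2-\alpha^2}$, $S(\gamma,\alpha)=\int\big[(\beta+\tfrac12)\ln(\beta+\tfrac12)-(\beta-\tfrac12)\ln(\beta-\tfrac12)\big]dp$, and $\mathcal{F}(\gamma,\alpha,\rho_0)=\int(\varepsilon-\mu)\gamma\,dp-\mu\rho_0-TS(\gamma,\alpha)+\frac U2(\int\alpha)^2+U(\int\gamma)^2+U\rho_0\int\alpha+2U\rho_0\int\gamma+\frac U2\rho_0^2$ (integrals over $\mathbb{T}^3$). $J(T)=\int_{\mathbb{T}^3}(e^{\varepsilon(p)/T}-1)^{-1}dp$. *)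

From HB Require Import structures.
From mathcomp Require Import all_boot all_order all_algebra.
From mathcomp Require Import all_classical all_reals all_analysis.
Set Implicit Arguments. Unset Strict Implicit. Unset Printing Implicit Defensive.
Import Order.TTheory GRing.Theory Num.Theory.
Import numFieldNormedType.Exports.
Local Open Scope classical_set_scope.
Local Open Scope ring_scope.

Section Bogoliubov.
Variable R : realType.

(* points of T^3 are represented by points of R^3 = (R*R)*R in the box [-pi,pi]^3 *)
Definition pt := ((R * R) * R)%type.

Definition leb3 := (((@lebesgue_measure R) \x (@lebesgue_measure R)) \x (@lebesgue_measure R))%E.

Definition box : set pt :=
  [set p | (- pi <= p.1.1 <= pi) /\ (- pi <= p.1.2 <= pi) /\ (- pi <= p.2 <= pi)].

(* integral over T^3 against the normalized Haar measure dp = d^3p/(2 pi)^3 *)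
Definition tint (f : pt -> R) : R := Rintegral leb3 box f / (2 * pi) ^+ 3.

(* extended-real version (used for J, whose integrand is nonnegative) *)
Definition tintE (f : pt -> R) : \bar R :=
  ((((2 * pi) ^+ 3)^-1)%:E * \int[leb3]_(p in box) (f p)%:E)%E.

Definition eps (p : pt) : R :=
  4 * (sin (p.1.1 / 2) ^+ 2 + sin (p.1.2 / 2) ^+ 2 + sin (p.2 / 2) ^+ 2).

Definition Jfun (T : R) : \bar R := tintE (fun p => (expR (eps p / T) - 1)^-1).

Definition beta (g a : pt -> R) (p : pt) : R :=
  Num.sqrt ((2^-1 + g p) ^+ 2 - a p ^+ 2).

Definition entropy (g a : pt -> R) : R :=
  tint (fun p => (beta g a p + 2^-1) * ln (beta g a p + 2^-1)
                 - (beta g a p - 2^-1) * ln (beta g a p - 2^-1)).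

Definition inD (g a : pt -> R) (rho0 : R) : Prop :=
  [/\ leb3.-integrable box (EFin \o g),
      measurable_fun box a,
      {ae leb3, forall p, box p -> 0 <= g p /\ a p ^+ 2 <= g p * (1 + g p)}
    & 0 <= rho0].

Definition Ffun (T mu U : R) (g a : pt -> R) (rho0 : R) : R :=
  tint (fun p => (eps p - mu) * g p) - mu * rho0 - T * entropy g a
  + U / 2 * (tint a) ^+ 2 + U * (tint g) ^+ 2 + U * rho0 * tint a
  + 2 * U * rho0 * tint g + U / 2 * rho0 ^+ 2.

Definition is_minimizer (T mu U : R) (g a : pt -> R) (rho0 : R) : Prop :=
  inD g a rho0 /\
  forall (g' a' : pt -> R) (rho0' : R), inD g' a' rho0' ->
    Ffun T mu U g a rho0 <= Ffun T mu U g' a' rho0'.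

End Bogoliubov.

(* If a minimiser (g, a, 0) had no condensate, the Bose-Einstein state
   g* = (exp (eps / T) - 1)^-1 with a = 0 and condensate rho = mu / U - 2 int g*
   would have strictly lower energy; rho > 0 because U int g* = U J(T) < mu / 2.
   Pointwise, beta - 1/2 <= g and the entropy density is s (beta - 1/2), where
   s x = (x + 1) ln (x + 1) - x ln x is concave with slope eps / T at g*; hence
   eps g - T s (beta - 1/2) >= eps g* - T s g* wherever eps > 0, i.e. off a
   null plane.  The other terms of the functional are a quadratic polynomial in
   (int g, int a, rho), which the choice of rho lowers strictly. *)

From Pilot Require Import Defs.
From HB Require Import structures.
From mathcomp Require Import all_boot all_order all_algebra.
From mathcomp Require Import all_classical all_reals all_analysis.
From mathcomp Require Import ring lra measurable_realfun.
Set Implicit Arguments. Unset Strict Implicit. Unset Printing Implicit Defensive.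
Import Order.TTheory GRing.Theory Num.Theory.
Local Open Scope classical_set_scope.
Local Open Scope ring_scope.

Section bose_entropy.
Variable R : realType.
Implicit Types x y e T : R.

Definition bose_entropy x : R := (x + 1) * ln (x + 1) - x * ln x.

Lemma ln_le_subr1 x : 0 < x -> ln x <= x - 1.
Proof. by move=> x0; have := @le_ln1Dx R (x - 1); rewrite [1 + _]addrC subrK; apply; lra. Qed.

Lemma bose_entropy0 : bose_entropy 0 = 0.
Proof. by rewrite /bose_entropy add0r ln1 mulr0 mul0r subrr. Qed.

(* Up to the factor [y + 1], the gap is the relative entropy of the Bernoulli
   laws of parameters [y / (y + 1)] and [x / (x + 1)]; [ln t <= t - 1] bounds
   both of its terms. *)
Lemma bose_entropy_tangent x y : 0 < x -> 0 <= y ->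
  bose_entropy y <= bose_entropy x + (y - x) * (ln (x + 1) - ln x).
Proof.
move=> x0; rewrite le0r => /predU1P[->|y0].
  rewrite bose_entropy0 /bose_entropy; have := @ln_ge0 R (x + 1); lra.
have h1 : ln (x * (y + 1) / (y * (x + 1))) <= x * (y + 1) / (y * (x + 1)) - 1.
  by apply: ln_le_subr1; rewrite divr_gt0 // mulr_gt0 //; lra.
have h2 : ln ((y + 1) / (x + 1)) <= (y + 1) / (x + 1) - 1.
  by apply: ln_le_subr1; rewrite divr_gt0 //; lra.
rewrite ln_div ?posrE ?mulr_gt0 // in h1; [|lra|lra].
rewrite !lnM ?posrE // in h1; [|lra|lra].
rewrite ln_div ?posrE // in h2; [|lra|lra].
have {}h1 := ler_wpM2l (ltW y0) h1.
have e1 : y * (x * (y + 1) / (y * (x + 1)) - 1) + ((y + 1) / (x + 1) - 1) = 0.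
  by field; lra.
rewrite /bose_entropy; lra.
Qed.

Lemma bose_entropy_ge0 y : 0 <= y -> 0 <= bose_entropy y.
Proof.
rewrite le0r => /predU1P[->|y0]; first by rewrite bose_entropy0.
have h : y * ln y <= y * ln (y + 1) by rewrite ler_wpM2l ?ler_ln ?posrE; lra.
have := @ln_ge0 R (y + 1); rewrite /bose_entropy; nra.
Qed.

Lemma bose_entropy_le y : 0 <= y -> bose_entropy y <= y + 1.
Proof.
rewrite le0r => /predU1P[->|y0]; first by rewrite bose_entropy0; lra.
have h1 : ln (y + 1) <= y by rewrite addrC le_ln1Dx //; lra.
have h2 : ln ((y + 1) / y) <= (y + 1) / y - 1 by apply: ln_le_subr1; rewrite divr_gt0 //; lra.
rewrite ln_div ?posrE in h2; [|lra|lra].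
have {}h2 := ler_wpM2l (ltW y0) h2.
have e : y * ((y + 1) / y - 1) = 1 by field; lra.
rewrite /bose_entropy; lra.
Qed.

Definition bose_occ e T : R := (expR (e / T) - 1)^-1.

Lemma bose_occ_ge0 e T : 0 <= e -> 0 < T -> 0 <= bose_occ e T.
Proof. by move=> e0 T0; rewrite invr_ge0 subr_ge0 -expR0 ler_expR divr_ge0 // ltW. Qed.

(* The tangent of [bose_entropy] at the Bose occupation has slope [e / T]. *)
Lemma gibbs_bose e T y : 0 < e -> 0 < T -> 0 <= y ->
  e * bose_occ e T - T * bose_entropy (bose_occ e T) <= e * y - T * bose_entropy y.
Proof.
move=> e0 T0 y0; set b := bose_occ e T.
have E1 : 1 < expR (e / T) by rewrite expR_gt1 divr_gt0.
have b0 : 0 < b by rewrite /b /bose_occ invr_gt0; lra.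
have slope : ln (b + 1) - ln b = e / T.
  rewrite -ln_div ?posrE; [|lra|lra].
  by rewrite (_ : (b + 1) / b = expR (e / T)) ?expRK // /b /bose_occ; field; lra.
have := ler_wpM2l (ltW T0) (bose_entropy_tangent b0 y0); rewrite slope.
have -> : T * (bose_entropy b + (y - b) * (e / T)) = T * bose_entropy b + (y - b) * e.
  by field; lra.
lra.
Qed.

Definition entropy_density (b : R) : R :=
  (b + 2^-1) * ln (b + 2^-1) - (b - 2^-1) * ln (b - 2^-1).

Lemma entropy_densityE b : entropy_density b = bose_entropy (b - 2^-1).
Proof. by rewrite /bose_entropy (_ : b - 2^-1 + 1 = b + 2^-1) //; field. Qed.

Lemma measurable_entropy_density : measurable_fun [set: R] entropy_density.
Proof.
have mshift (c : R) : measurable_fun [set: R] (fun b => b + c) by exact: measurable_funD.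
apply: measurable_funB; apply: measurable_funM => //;
  exact: measurableT_comp (@measurable_ln R) (mshift _).
Qed.

End bose_entropy.

Section density_energy.
Variable R : realFieldType.

Definition density_energy (mu U n A rho : R) : R :=
  - mu * n - mu * rho + U / 2 * A ^+ 2 + U * n ^+ 2 + U * rho * A
  + 2 * U * rho * n + U / 2 * rho ^+ 2.

(* With [mu = U (rho + 2 n)] the difference of the two sides is
   [U ((n' - n - rho/2)^2 + rho^2/4 + A^2/2)]. *)
Lemma density_energy_condensate (mu U n n' A rho : R) :
  0 < U -> 0 < rho -> mu = U * (rho + 2 * n) ->
  density_energy mu U n 0 rho < density_energy mu U n' A 0.
Proof.
move=> U0 rho0 ->; rewrite -subr_gt0.
have -> : density_energy (U * (rho + 2 * n)) U n' A 0
          - density_energy (U * (rho + 2 * n)) U n 0 rho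
        = U * ((n' - n - rho / 2) ^+ 2 + rho ^+ 2 / 4 + A ^+ 2 / 2).
  by rewrite /density_energy; field.
have := sqr_ge0 (n' - n - rho / 2); have := sqr_ge0 A.
have : 0 < rho ^+ 2 by rewrite exprn_gt0.
move=> *; apply: mulr_gt0 => //; lra.
Qed.

End density_energy.

Lemma beta_bounds (R : rcfType) (x y : R) : 0 <= x -> y ^+ 2 <= x * (1 + x) ->
  2^-1 <= Num.sqrt ((2^-1 + x) ^+ 2 - y ^+ 2) <= 2^-1 + x.
Proof.
move=> x0 yx; have h2 : 2^-1 * 2 = 1 :> R by rewrite mulVf.
move: h2; set h := 2^-1 => h2; have := sqr_ge0 y.
have arg0 : 0 <= (h + x) ^+ 2 - y ^+ 2 by nra.
have := sqr_sqrtr arg0; have := sqrtr_ge0 ((h + x) ^+ 2 - y ^+ 2).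
set s := Num.sqrt _ => s0 ss y0; apply/andP; split; nra.
Qed.

Lemma sin_sqr_gt0 (R : realType) (x : R) : x != 0 -> - (pi / 2) <= x <= pi / 2 ->
  0 < sin x ^+ 2.
Proof.
move=> x0 hx; rewrite exprn_even_gt0 //; apply: contra x0 => /eqP sx0.
have pi0 := @pi_gt0 R.
by apply/eqP/sin_inj; rewrite ?sin0 // in_itv /=; apply/andP; split; lra.
Qed.

Lemma measurable_inv (R : realType) : measurable_fun [set: R] (@GRing.inv R).
Proof.
have -> : [set: R] = [set x | x != 0] `|` [set 0].
  by apply/seteqP; split => x //= _; case: (eqVneq x 0) => [->|]; [right | left].
apply/measurable_funU; [by apply: open_measurable; exact: open_neq | exact: measurable_set1 |].
split; last exact: measurable_fun_set1.
apply: open_continuous_measurable_fun; first exact: open_neq.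
by move=> x; rewrite inE /= => x0; apply: inv_continuous.
Qed.

Section ae_integral.
Context d (T : measurableType d) (R : realType).
Variable mu : {measure set T -> \bar R}.

Lemma aeS (P Q : T -> Prop) : (forall x, P x -> Q x) ->
  {ae mu, forall x, P x} -> {ae mu, forall x, Q x}.
Proof. exact: filterS. Qed.

Lemma aeS2 (P Q S : T -> Prop) : (forall x, P x -> Q x -> S x) ->
  {ae mu, forall x, P x} -> {ae mu, forall x, Q x} -> {ae mu, forall x, S x}.
Proof. exact: filterS2. Qed.

Variable D : set T.
Hypothesis mD : measurable D.

Lemma le_integrable_ae (f g : T -> \bar R) : measurable_fun D f ->
  {ae mu, forall x, D x -> (`|f x| <= `|g x|)%E} ->
  mu.-integrable D g -> mu.-integrable D f.
Proof.
move=> mf [N [mN N0 fgN]] ig.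
have mDN : measurable (D `\` N) by exact: measurableD.
apply/(negligible_integrable mN mD mf N0).
apply: le_integrable (measurable_funS mD (@subDsetl _ _ _) mf) _
  (integrableS mD mDN (@subDsetl _ _ _) ig) => //.
by move=> x [Dx Nx]; apply: contrapT => fg; apply/Nx/fgN => /(_ Dx).
Qed.

Lemma le_Rintegral_ae (f g : T -> R) :
  mu.-integrable D (EFin \o f) -> mu.-integrable D (EFin \o g) ->
  {ae mu, forall x, D x -> f x <= g x} ->
  Rintegral mu D f <= Rintegral mu D g.
Proof.
move=> iF iG [N [mN N0 fgN]].
have mDN : measurable (D `\` N) by exact: measurableD.
rewrite /Rintegral (negligible_integral mN mD iF N0) (negligible_integral mN mD iG N0).
apply: le_Rintegral mDN (integrableS mD mDN (@subDsetl _ _ _) iF)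
  (integrableS mD mDN (@subDsetl _ _ _) iG) _.
by move=> x [Dx Nx]; apply: contrapT => fg; apply/Nx/fgN => /(_ Dx).
Qed.

End ae_integral.

Section torus.
Variable R : realType.
Local Notation pt := (pt R).
Local Notation eps := (@eps R).
Local Notation leb3 := (@leb3 R).
Local Notation box := (@box R).
(* [pt] with the product sigma-algebra of [leb3]; writing [box : set pt]
   would pick the one of the default measurable structure on [R] instead *)
Local Notation P3 := ((measurableTypeR R * measurableTypeR R) * measurableTypeR R)%type.
Local Notation I := `[(- pi : R), pi]%classic.
Implicit Types (p : pt) (f h g a : pt -> R) (k : R).

Lemma box_setX : box = (I `*` I) `*` I.
Proof.
rewrite set_itvcc; apply/seteqP; split => -[[x y] z] /=.
  by move=> [h1 [h2 h3]].
by move=> [[h1 h2] h3].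
Qed.

Lemma measurable_box : measurable (box : set P3).
Proof. by rewrite box_setX; apply: measurableX => //; apply: measurableX. Qed.

Lemma leb3_box_lty : (leb3 box < +oo)%E.
Proof.
have lebI : lebesgue_measure I = (pi + pi)%:E.
  by rewrite lebesgue_measure_itv /= lte_fin ifT ?opprK -?EFinD // gtrN ?pi_gt0.
rewrite box_setX /leb3.
rewrite (@product_measure1E _ _ _ _ R (lebesgue_measure \x lebesgue_measure)%E
  lebesgue_measure (I `*` I) I); last 2 first.
- exact: measurableX.
- by [].
rewrite /= (@product_measure1E _ _ _ _ R lebesgue_measure lebesgue_measure I I) //.
by rewrite /= !lebI -!EFinM ltry.
Qed.

Lemma leb3_plane0 : leb3 (setT `*` [set 0] : set P3) = 0%E.
Proof. by rewrite /leb3 product_measure1E //= lebesgue_measure_set1 mule0. Qed.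

Definition tintegrable (f : pt -> R) := leb3.-integrable box (EFin \o f).

Lemma tintegrable_cst k : tintegrable (fun=> k).
Proof.
apply/integrableP; split; first exact: measurable_cst.
rewrite integral_cst /=; last exact: measurable_box.
by rewrite lte_mul_pinfty // leb3_box_lty.
Qed.

Lemma tintegrableD f h : tintegrable f -> tintegrable h ->
  tintegrable (fun p => f p + h p).
Proof.
move=> iF iH; apply: eq_integrable (integrableD measurable_box iF iH) => //.
exact: measurable_box.
Qed.

Lemma tintegrableB f h : tintegrable f -> tintegrable h ->
  tintegrable (fun p => f p - h p).
Proof.
move=> iF iH; apply: eq_integrable (integrableB measurable_box iF iH) => //.
exact: measurable_box.
Qed.

Lemma tintegrableZl k f : tintegrable f -> tintegrable (fun p => k * f p).
Proof. by move=> iF; have := integrableZl measurable_box k iF. Qed.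

Lemma tintB f h : tintegrable f -> tintegrable h ->
  tint (fun p => f p - h p) = tint f - tint h.
Proof. by move=> iF iH; rewrite /tint RintegralB ?mulrBl //; apply: measurable_box. Qed.

Lemma tintZl k f : tintegrable f -> tint (fun p => k * f p) = k * tint f.
Proof. by move=> iF; rewrite /tint RintegralZl ?mulrA //; apply: measurable_box. Qed.

Lemma tint0 : @tint R (fun=> 0) = 0.
Proof. by rewrite /tint /Rintegral integral0 mul0r. Qed.

Lemma le_tint_ae f h : tintegrable f -> tintegrable h ->
  {ae leb3, forall p, box p -> f p <= h p} -> tint f <= tint h.
Proof.
move=> *; rewrite ler_pM2r ?invr_gt0 ?exprn_gt0 ?mulr_gt0 ?pi_gt0 //.
by apply: le_Rintegral_ae => //; apply: measurable_box.
Qed.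

Lemma le_tintegrable_ae f h : measurable_fun (box : set P3) f ->
  {ae leb3, forall p, box p -> `|f p| <= `|h p|} ->
  tintegrable h -> tintegrable f.
Proof.
move=> mf fh; apply: le_integrable_ae; [exact: measurable_box | exact/measurable_EFinP |].
by apply: (aeS (mu := leb3)) fh => p fhp /fhp.
Qed.

Lemma eps_ge0 p : 0 <= eps p.
Proof. by rewrite mulr_ge0 // !addr_ge0 ?sqr_ge0. Qed.

Lemma eps_le12 p : eps p <= 12.
Proof.
have := sin_le1 (p.1.1 / 2); have := sin_geN1 (p.1.1 / 2).
have := sin_le1 (p.1.2 / 2); have := sin_geN1 (p.1.2 / 2).
have := sin_le1 (p.2 / 2); have := sin_geN1 (p.2 / 2).
rewrite /eps; nra.
Qed.

Lemma eps_gt0 p : box p -> p.2 != 0 -> 0 < eps p.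
Proof.
move=> [_ [_ /andP[h1 h2]]] p0.
have := @sin_sqr_gt0 R (p.2 / 2); rewrite mulf_neq0 ?invr_eq0 // => /(_ isT).
have := sqr_ge0 (sin (p.1.1 / 2)); have := sqr_ge0 (sin (p.1.2 / 2)).
by rewrite /eps => *; apply: mulr_gt0 => //; lra.
Qed.

(* [eps] vanishes on the box only on the null plane [p.2 = 0] *)
Lemma ae_eps_gt0 : {ae leb3, forall p, box p -> 0 < eps p}.
Proof.
exists (setT `*` [set 0] : set P3); split; [exact: measurableX | exact: leb3_plane0 |].
move=> p /= neps; split => //; apply: contrapT => /eqP p20.
by apply: neps => bp; apply: eps_gt0.
Qed.

Lemma measurable_eps : measurable_fun (setT : set P3) eps.
Proof.
have msin2 : measurable_fun [set: R] (fun x => sin (x / 2) ^+ 2).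
  apply: measurable_funX; apply: measurableT_comp; last exact: measurable_funM.
  exact: continuous_measurable_fun (@continuous_sin R).
rewrite /Defs.eps; apply: measurable_funM => //.
apply: measurable_funD; [apply: measurable_funD|].
- by apply: measurableT_comp msin2 _; apply: measurableT_comp measurable_fst measurable_fst.
- by apply: measurableT_comp msin2 _; apply: measurableT_comp measurable_snd measurable_fst.
- exact: measurableT_comp msin2 measurable_snd.
Qed.

Lemma tintegrable_epsM f : tintegrable f -> tintegrable (fun p => eps p * f p).
Proof.
move=> iF; apply: le_tintegrable_ae (tintegrableZl 12 iF).
  apply: measurable_funM; first exact: measurable_funS measurableT (subsetT _) measurable_eps.
  exact: (measurable_EFinP _ _).1 (measurable_int _ iF).
apply: aeW => p _; rewrite (normrM (eps p)) (normrM 12) (ger0_norm (eps_ge0 p)).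
by rewrite ler_wpM2r // ger0_norm // eps_le12.
Qed.

Lemma measurable_beta g a : measurable_fun (box : set P3) g ->
  measurable_fun (box : set P3) a -> measurable_fun (box : set P3) (beta g a).
Proof.
move=> mg ma; apply: measurableT_comp.
  exact: continuous_measurable_fun (@sqrt_continuous R).
by apply: measurable_funB; apply: measurable_funX => //; apply: measurable_funD.
Qed.

Lemma tintegrable_entropy g a rho : inD g a rho ->
  tintegrable (fun p => entropy_density (beta g a p)).
Proof.
move=> [ig ma hae _]; have mg := (measurable_EFinP _ _).1 (measurable_int _ ig).
apply: le_tintegrable_ae (tintegrableD (tintegrable_cst 1) ig).
  by apply: measurableT_comp; [exact: measurable_entropy_density | exact: measurable_beta].
apply: (aeS (mu := leb3)) hae => p gp bp; have [g0 ag] := gp bp.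
have /andP[b1 b2] := beta_bounds g0 ag; rewrite -/(beta g a p) in b1 b2.
rewrite entropy_densityE !ger0_norm ?bose_entropy_ge0 ?subr_ge0 //; last lra.
by apply: le_trans (bose_entropy_le _) _; lra.
Qed.

Variable T : R.

Lemma FfunE mu U g a rho : tintegrable g ->
  Ffun T mu U g a rho = tint (fun p => eps p * g p) - T * entropy g a
                        + density_energy mu U (tint g) (tint a) rho.
Proof.
move=> ig; rewrite /Ffun /density_energy.
have -> : tint (fun p => (eps p - mu) * g p) = tint (fun p => eps p * g p) - mu * tint g.
  rewrite -tintZl // -tintB ?tintegrable_epsM ?tintegrableZl //.
  by congr tint; apply/funext => p; ring.
ring.
Qed.

Hypothesis T0 : 0 < T.

Definition bose p : R := bose_occ (eps p) T.

Lemma bose_ge0 p : 0 <= bose p.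
Proof. exact/bose_occ_ge0/T0/eps_ge0. Qed.

Lemma measurable_bose : measurable_fun (setT : set P3) bose.
Proof.
rewrite /bose /bose_occ.
apply: measurableT_comp; first exact: measurable_inv.
apply: measurable_funB => //; apply: measurableT_comp; first exact: measurable_expR.
by apply: measurable_funM => //; exact: measurable_eps.
Qed.

Lemma tintegrable_bose : (Jfun T < +oo)%E -> tintegrable bose.
Proof.
have c0 : 0 < (2 * pi) ^+ 3 :> R by rewrite exprn_gt0 ?mulr_gt0 ?pi_gt0.
move=> Jfin; apply/integrableP; split.
  by apply/measurable_EFinP; exact: measurable_funS measurableT (subsetT _) measurable_bose.
have cJfin : (((2 * pi) ^+ 3)%:E * Jfun T < +oo)%E by rewrite lte_mul_pinfty // lee_fin ltW.
apply: le_lt_trans cJfin; rewrite /Jfun /tintE muleA -EFinM divff ?mul1e ?gt_eqF //.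
by rewrite le_eqVlt; apply/orP; left; apply/eqP/eq_integral => p _; rewrite /= ger0_norm ?bose_ge0.
Qed.

Lemma Jfun_tint : tintegrable bose -> Jfun T = (tint bose)%:E.
Proof.
move=> ib; rewrite /Jfun /tintE /tint /Rintegral.
rewrite -[in LHS](fineK (integrable_fin_num _ ib)); last exact: measurable_box.
by apply: (congr1 EFin); rewrite mulrC.
Qed.

Lemma bose_density_lt (mu U : R) : 0 < U ->
  (U%:E * Jfun T < (mu / 2)%:E)%E -> tintegrable bose /\ U * tint bose < mu / 2.
Proof.
move=> U0 hJ; have ib : tintegrable bose.
  apply: tintegrable_bose; rewrite ltNge leye_eq; apply/negP => /eqP Jy.
  by move: hJ; rewrite Jy gt0_muley ?lte_fin.
by split => //; move: hJ; rewrite Jfun_tint // -EFinM lte_fin.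
Qed.

Lemma beta_bose p : beta bose (fun=> 0) p = 2^-1 + bose p.
Proof.
by rewrite /beta expr0n /= subr0 sqrtr_sqr ger0_norm // addr_ge0 ?bose_ge0.
Qed.

Lemma inD_bose rho : tintegrable bose -> 0 <= rho -> inD bose (fun=> 0) rho.
Proof.
move=> ib rho0; split => //.
apply: aeW => p _; split; first exact: bose_ge0.
by rewrite expr0n mulr_ge0 ?addr_ge0 ?bose_ge0.
Qed.

Lemma free_energy_bose_le g a rho : inD g a rho -> tintegrable bose ->
  tint (fun p => eps p * bose p) - T * entropy bose (fun=> 0)
  <= tint (fun p => eps p * g p) - T * entropy g a.
Proof.
move=> Dg ib; have [ig _ hae _] := Dg.
have iSb := tintegrable_entropy (inD_bose ib (lexx 0)).
have iSg := tintegrable_entropy Dg.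
rewrite /entropy -!tintZl // -!tintB ?tintegrableZl ?tintegrable_epsM //.
apply: le_tint_ae; try by apply: tintegrableB; rewrite ?tintegrableZl ?tintegrable_epsM.
apply: (aeS2 (mu := leb3) _ hae ae_eps_gt0) => p gp ep bp.
have [g0 ag] := gp bp; have e0 := ep bp.
have /andP[b1 b2] := beta_bounds g0 ag; rewrite -/(beta g a p) in b1 b2.
have Sb : entropy_density (beta bose (fun=> 0) p) = bose_entropy (bose p).
  by rewrite entropy_densityE beta_bose addrC addKr.
have Sg := entropy_densityE (beta g a p).
rewrite /entropy_density in Sb Sg; rewrite Sb Sg.
have y0 : 0 <= beta g a p - 2^-1 by lra.
have yg : beta g a p - 2^-1 <= g p by lra.
have := gibbs_bose e0 T0 y0; have := ler_wpM2l (eps_ge0 p) yg.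
rewrite /bose; lra.
Qed.

End torus.

Theorem proposition4p4 (R : realType) (T mu U : R) :
  0 < T -> 0 < mu -> 0 < U ->
  (U%:E * Jfun T < (mu / 2)%:E)%E ->
  forall (g a : pt R -> R) (rho0 : R),
    is_minimizer T mu U g a rho0 -> rho0 != 0.
Proof.
move=> T0 mu0 U0 hJ g a rho0 [Dg minF]; apply/eqP => rho00.
have [ib bose_lt] := bose_density_lt T0 U0 hJ.
set n := tint (bose T) in bose_lt.
pose rho := mu / U - 2 * n.
have rho_gt0 : 0 < rho by rewrite subr_gt0 ltr_pdivlMr // mulrC mulrA; lra.
have mu_eq : mu = U * (rho + 2 * n) by rewrite /rho subrK mulrC divfK ?gt_eqF.
have := minF _ _ _ (inD_bose T0 ib (ltW rho_gt0)).
have [ig _ _ _] := Dg.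
rewrite !FfunE // tint0 rho00.
have := free_energy_bose_le T0 Dg ib.
have := density_energy_condensate (tint g) (tint a) U0 rho_gt0 mu_eq.
lra.
Qed.
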